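(* Let $G=(V,E)$ be a control flow graph and $p$ a predicate node. If $p$ has at least two successors in $A_p$, then $\{p\}$ is a trivial strongly connected component of $A_p$, and all other nodes of $A_p$ form a single strongly connected component whose induced subgraph is a cycle.
   Context: A control flow graph (CFG) is a finite directed graph $G=(V,E)$ in which every node has at most two outgoing edges; nodes with exactly two outgoing edges are predicate nodes. A path from $n_1$ is a nonempty finite or infinite sequence of nodes with each adjacent pair an edge; it is maximal if it is infinite or its last node has no successor. $V_p$ is the set of nodes occurring on all maximal paths from $p$ in $G$. For $V'\subseteq V$, a $V'$-interval from $x$ to $y$ is a finite path $n_1\ldots n_k$ in $G$ with $k\ge 2$, $n_1=x\in V'$, $n_k=y\in V'$, and $n_i\notin V'$ for $1<i<k$. $A_p$ is the directed graph with node set $V_p$ and an edge $(x,y)$ iff there is a $V_p$-interval from $x$ to $y$ in $G$. An SCC is trivial if its induced subgraph has no edge. A graph is a cycle if it is isomorphic to a graph with nodes $n_1,\ldots,n_k$ ($k>0$) and edges exactly $(n_1,n_2),\ldots,(n_{k-1},n_k),(n_k,n_1)$. *)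

From mathcomp Require Import all_boot.
From Stdlib Require Import Relations.
Set Implicit Arguments. Unset Strict Implicit. Unset Printing Implicit Defensive.

Section CFG.
Variables (T : finType) (e : rel T).

Definition cfg : Prop := forall x : T, #|[pred y | e x y]| <= 2.

Definition predicate_node (p : T) : Prop := #|[pred y | e p y]| = 2.

(* n lies on every maximal path from p: every finite path p :: s whose last
   node has no successor contains n, and every infinite path f with f 0 = p
   visits n. *)
Definition Vp (p n : T) : Prop :=
  (forall s : seq T, path e p s -> (forall y, ~~ e (last p s) y) -> n \in p :: s)
  /\ (forall f : nat -> T, f 0 = p -> (forall i, e (f i) (f i.+1)) ->
        exists i, f i = n).

Definition interval (V' : T -> Prop) (x y : T) : Prop :=
  V' x /\ V' y /\
  exists s : seq T, path e x (rcons s y) /\ (forall z, z \in s -> ~ V' z).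

Definition Ap_edge (p x y : T) : Prop := interval (Vp p) x y.

Definition Ap_reach (p : T) : T -> T -> Prop := clos_refl_trans T (Ap_edge p).

Definition is_SCC (p : T) (C : T -> Prop) : Prop :=
  (exists x, C x) /\
  (forall x, C x -> Vp p x) /\
  (forall x y, C x -> C y -> Ap_reach p x y) /\
  (forall x y, C x -> Vp p y -> Ap_reach p x y -> Ap_reach p y x -> C y).

Definition trivial_SCC (p : T) (C : T -> Prop) : Prop :=
  is_SCC p C /\ (forall x y, C x -> C y -> ~ Ap_edge p x y).

End CFG.

Definition is_cycle (T : eqType) (C : T -> Prop) (E : T -> T -> Prop) : Prop :=
  exists s : seq T,
    0 < size s /\ uniq s /\ (forall z, C z <-> z \in s) /\
    (forall x y, C x -> C y ->
       (E x y <-> exists i, i < size s /\ x = nth x s i /\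
                            y = nth x s (i.+1 %% size s))).

From mathcomp Require Import all_boot boolp zify.
From Stdlib Require Import Relations.
Set Implicit Arguments. Unset Strict Implicit. Unset Printing Implicit Defensive.

(* Every node of V_p lies on every maximal path of A_p from p, because such a
   path lifts to a maximal path of G whose nodes in V_p are exactly the nodes
   of the A_p-path.  Now let p have two distinct A_p-successors, and let X and
   B be sets of nodes with B nonempty, such that every successor of p lies in
   X or in B and every nonempty A_p-walk from p into X passes through all of B.
   Then no such walk exists: a shortest one could be shortened by leaving p
   through the other successor.  Taking for X the root p, a node reachable
   from p supposed to have no successor, and a cycle reachable from p (with
   B the rest of V_p \ {p}) shows in turn that no walk returns to p, that
   every node reachable from p has a successor, so that some cycle is
   reachable from p, and that such a cycle contains all of V_p \ {p}.  A
   shortest such cycle has neither repeated nodes nor chords, hence is the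
   subgraph of A_p induced on V_p \ {p}. *)

Definition infinite_path (T : Type) (e : rel T) (f : nat -> T) :=
  forall i, e (f i) (f i.+1).

Section InfinitePaths.
Variables (T : eqType) (e : rel T).

Lemma infinite_path_cat x s g :
  path e x s -> infinite_path e g -> g 0 = last x s ->
  exists2 f, f 0 = x /\ infinite_path e f &
    forall i, f i \in x :: s \/ exists j, f i = g j.
Proof.
move=> es eg g0.
exists (fun n => if n <= size s then nth x (x :: s) n else g (n - size s)).
  split=> // n; case: (ltngtP n (size s)) => [lt_ns|gt_ns|->].
  - by move/(pathP x): es => /(_ _ lt_ns).
  - by rewrite subSn ?(ltnW gt_ns).
  - by rewrite subSn // subnn -last_nth -g0.
move=> n; case: leqP => [le_ns|_]; last by right; eexists.
by left; rewrite mem_nth.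
Qed.

Lemma closed_path_infinite x s :
  path e x s -> s != [::] -> last x s = x ->
  exists2 g, g 0 = x /\ infinite_path e g & forall i, g i \in x :: s.
Proof.
move=> es s_ne ls; have s_gt0 : 0 < size s by case: s s_ne {es ls}.
exists (fun n => nth x (x :: s) (n %% size s)); last first.
  by move=> n; rewrite mem_nth // ltnS ltnW ?ltn_pmod.
split=> [|n]; first by rewrite mod0n.
have lt_ns := ltn_pmod n s_gt0.
rewrite -addn1 -modnDml addn1; move/(pathP x): es => /(_ _ lt_ns).
move: (n %% size s) lt_ns => k lt_ks.
case: (ltngtP k.+1 (size s)) => [lt_Sk|gt_Sk|eq_Sk] esk.
- by rewrite (modn_small lt_Sk).
- by rewrite ltnNge lt_ks in gt_Sk.
- by rewrite eq_Sk modnn /= -[X in e _ X]ls -nth_last -eq_Sk.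
Qed.
End InfinitePaths.

Section FiniteGraphs.
Variables (T : finType) (e : rel T).

Lemma infinite_path_connect f i : infinite_path e f -> connect e (f 0) (f i).
Proof.
move=> ef; elim: i => [|i IH]; first exact: connect0.
exact: connect_trans IH (connect1 (ef i)).
Qed.

Lemma dead_end_or_infinite_path x :
  (exists2 s, path e x s & forall y, ~~ e (last x s) y) \/
  (exists2 f, f 0 = x & infinite_path e f).
Proof.
pose succ y := odflt y [pick z | e y z]; pose f n := iter n succ x.
have succP y : [exists z, e y z] -> e y (succ y).
  by rewrite /succ; case: pickP => [z //|none /existsP[z]]; rewrite none.
pose dead n := ~~ [exists y, e (f n) y].
have [[n0 dead_n0]|alive] := pselect (exists n, dead n).
  left; have [n /existsPn dead_n min_n] := @ex_minnP dead (ex_intro _ n0 dead_n0).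
  exists (traject succ (succ x) n); last by rewrite last_traject.
  apply/(pathP x) => i; rewrite size_traject => lt_in.
  rewrite -trajectS nth_traject 1?ltnW // (set_nth_default (succ x)) ?size_traject //.
  rewrite nth_traject // -iterSr; apply: succP; apply: contraT => dead_i.
  by have := min_n i dead_i; rewrite leqNgt lt_in.
right; exists f => // i; apply: succP; apply: contraT => dead_i.
by case: alive; exists i.
Qed.

Lemma serial_cycle (S : pred T) x :
  x \in S -> (forall y, y \in S -> exists2 z, e y z & z \in S) ->
  exists2 c, c != [::] /\ cycle e c & {subset c <= S}.
Proof.
move=> Sx serial; pose succ y := odflt y [pick z | e y z && (z \in S)].
have succS y : y \in S -> e y (succ y) && (succ y \in S).
  move=> Sy; rewrite /succ; case: pickP => [z //|none].
  by have [z ez Sz] := serial y Sy; have := none z; rewrite ez Sz.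
have trajS z n : z \in S -> {subset traject succ z n <= S}.
  by move=> Sz w /trajectP[m _ ->]; apply: iter_in Sz => a /succS /andP[].
have /(uniqPn x)[i [j [lt_ij lt_j]]] : ~~ uniq (traject succ x #|T|.+1).
  apply/negP => /card_uniqP; rewrite size_traject => card_eq.
  by have := max_card (mem (traject succ x #|T|.+1)); rewrite card_eq ltnn.
rewrite size_traject in lt_j; rewrite !nth_traject ?(ltn_trans lt_ij) //.
set y := iter i succ x => eq_ij.
have Sy : y \in S.
  by apply: (trajS x #|T|.+1 Sx); apply/trajectP; exists i; rewrite ?(ltn_trans lt_ij).
have [k eq_k] : exists k, j - i = k.+1 by exists (j - i).-1; rewrite prednK // subn_gt0.
exists (traject succ y (j - i)); last exact: trajS.
split; first by rewrite eq_k.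
have loop_y : iter k.+1 succ y = y.
  by rewrite -eq_k /y -iterD subnK ?(ltnW lt_ij) // eq_ij.
rewrite eq_k trajectS /= -[X in rcons _ X]loop_y iterSr -trajectSr.
apply: (sub_in_path (P := S) (e := frel succ)); last exact: fpath_traject.
  by move=> a b Sa _ /eqP <-; case/andP: (succS a Sa).
by apply/allP; rewrite -trajectS; exact: trajS.
Qed.

Lemma clos_refl_trans_connect (r : T -> T -> Prop) x y :
  clos_refl_trans T r x y <-> connect (fun a b => `[< r a b >]) x y.
Proof.
split=> [|/connectP[s]].
  elim=> [a b /asboolP rab|a|a b c _ ab _ bc]; first exact: connect1.
    exact: connect0.
  exact: connect_trans ab bc.
elim: s x => [x _ -> |z s IH x /= /andP[/asboolP rxz zs] ys]; first exact: rt_refl.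
by apply: (rt_trans _ _ _ z); [exact: rt_step | exact: IH].
Qed.
End FiniteGraphs.

Section BranchingWalks.
Variables (T : eqType) (E : rel T) (p y1 y2 : T) (tg sw : pred T).
Hypotheses (y12 : y1 != y2) (Ey1 : E p y1) (Ey2 : E p y2).
Hypothesis succ_tg_sw : forall y, E p y -> tg y || sw y.
Hypothesis sw_ne : exists z, sw z.
Hypothesis walk_sweeps :
  forall q, path E p q -> q != [::] -> tg (last p q) -> {subset sw <= q}.

Lemma branching_target_unreachable q :
  path E p q -> q != [::] -> ~~ tg (last p q).
Proof.
have [z0 sw_z0] := sw_ne.
have [n] := ubnP (size q); elim: n q => [|n IH] [|a q] //= lt_qn /andP[Ea Eq] _.
apply/negP => tg_q.
have sweep_q := walk_sweeps (q := a :: q) (introT andP (conj Ea Eq)) isT tg_q.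
have [y ya Ey] : exists2 y, y != a & E p y.
  by case: (eqVneq y1 a) => [<-|]; [exists y2; rewrite // eq_sym | exists y1].
have Ey_path : path E p [:: y] by rewrite /= Ey.
case/orP: (succ_tg_sw Ey) => [tg_y|sw_y].
  case: q {Eq} lt_qn tg_q sweep_q => [|b q] lt_qn tg_q sweep_q.
    have := walk_sweeps Ey_path isT tg_y sw_z0; have := sweep_q _ sw_z0.
    by rewrite !inE => /eqP-> /eqP ya_eq; rewrite ya_eq eqxx in ya.
  by apply: (negP (IH [:: y] _ Ey_path isT)) => //=; move: lt_qn => /=; lia.
move: Eq tg_q lt_qn; have := sweep_q y sw_y.
rewrite inE (negbTE ya) /= => /splitPr[u v].
rewrite cat_path last_cat /= => /andP[_ /andP[_ Ev]] tg_v lt_n.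
by apply: (negP (IH (y :: v) _ _ isT)) => //=; rewrite ?Ey // size_cat /= in lt_n; lia.
Qed.
End BranchingWalks.

Section MinimalCycle.
Variables (T : eqType) (E : rel T).

Lemma minimal_subcycle c0 : c0 != [::] -> cycle E c0 ->
  exists c, [/\ c != [::], cycle E c, {subset c <= c0} &
    forall c', cycle E c' -> c' != [::] -> {subset c' <= c} -> size c <= size c'].
Proof.
have [n] := ubnP (size c0); elim: n c0 => // n IH c0 lt_c0n c0_ne c0_cyc.
have [[c' [c'_ne c'_cyc c'_c0 lt_c'c0]]|c0_min] := pselect (exists c',
  [/\ c' != [::], cycle E c', {subset c' <= c0} & size c' < size c0]).
  have [|c [c_ne c_cyc c_c' c_min]] := IH c' _ c'_ne c'_cyc.
    exact: leq_trans lt_c'c0 _.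
  by exists c; split=> // z /c_c'/c'_c0.
exists c0; split=> // c' c'_cyc c'_ne c'_c0; rewrite leqNgt; apply/negP => lt_c'c0.
by apply: c0_min; exists c'.
Qed.

Variable c : seq T.
Hypothesis c_cycle : cycle E c.
Hypothesis c_min :
  forall c', cycle E c' -> c' != [::] -> {subset c' <= c} -> size c <= size c'.

Let rot_cycle_cons i x q : rot i c = x :: q ->
  [/\ cycle E (x :: q), size c = (size q).+1 & x :: q =i c].
Proof.
move=> rot_c; split; first by rewrite -rot_c rot_cycle.
  by rewrite -(size_rot i) rot_c.
by move=> z; rewrite -rot_c mem_rot.
Qed.

Lemma min_cycle_uniq : uniq c.
Proof.
apply: count_mem_uniq => x.
case: (boolP (x \in c)) => [/rot_to[i q rot_c]|/count_memPn //].
have [cyc sz mem_q] := rot_cycle_cons rot_c.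
have /permP cnt : perm_eq (rot i c) c by rewrite perm_rot.
rewrite -cnt rot_c /= eqxx add1n; congr _.+1; apply/count_memPn/negP => x_q.
case/splitPr: q / x_q cyc sz mem_q {rot_c} => q1 q2 cyc sz mem_q.
have sub_cyc : cycle E (x :: q1).
  move: cyc; rewrite /= rcons_cat cat_path /= => /and3P[xq1 lq1 _].
  by rewrite rcons_path xq1.
have sub_c : {subset x :: q1 <= c}.
  by move=> z; rewrite -mem_q !inE mem_cat => /predU1P[->|->]; rewrite ?eqxx ?orbT.
by have := c_min sub_cyc isT sub_c; rewrite sz size_cat /=; lia.
Qed.

Lemma min_cycle_next x y : x \in c -> y \in c -> E x y -> y = next c x.
Proof.
case/rot_to=> i q rot_c; have [cyc sz mem_q] := rot_cycle_cons rot_c.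
rewrite -(next_rot i min_cycle_uniq) rot_c next_nth mem_head /= eqxx -mem_q.
rewrite inE => /predU1P[-> Exx|y_q Exy].
  case: q {rot_c} cyc sz mem_q => [//|z q] _ sz mem_q.
  have cyc_x : cycle E [:: x] by rewrite /= Exx.
  have sub_c : {subset [:: x] <= c}.
    by move=> w; rewrite inE => /eqP->; rewrite -mem_q mem_head.
  by have := c_min cyc_x isT sub_c; rewrite sz.
case/splitPr: q / y_q {rot_c} cyc sz mem_q => q1 q2 cyc sz mem_q.
case: q1 => [//|z q1] in cyc sz mem_q *.
have sub_cyc : cycle E (y :: rcons q2 x).
  move: cyc; rewrite /= rcons_cat cat_path /= => /and3P[_ _ /andP[_ yq2]].
  by rewrite rcons_path yq2 last_rcons Exy.
have sub_c : {subset y :: rcons q2 x <= c}.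
  move=> w; rewrite -mem_q !(inE, mem_cat, mem_rcons).
  by case/or3P=> [/eqP->|/eqP->|->]; rewrite ?eqxx ?orbT.
by have := c_min sub_cyc isT sub_c; rewrite sz /= size_cat /= size_rcons; lia.
Qed.
End MinimalCycle.

Lemma next_nth_mod (T : eqType) (s : seq T) x i :
  uniq s -> i < size s -> next s (nth x s i) = nth x s (i.+1 %% size s).
Proof.
move=> s_uniq lt_is; rewrite next_nth mem_nth // index_uniq //.
case: s s_uniq lt_is => [//|y s] _.
rewrite /= ltnS leq_eqVlt => /predU1P[->|lt_is].
  by rewrite modnn nth_default.
by rewrite modn_small ?ltnS // (set_nth_default x).
Qed.

Lemma is_cycle_next (T : eqType) (C : T -> Prop) (R : T -> T -> Prop) s :
  s != [::] -> uniq s -> (forall z, C z <-> z \in s) ->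
  (forall x y, x \in s -> y \in s -> R x y <-> y = next s x) -> is_cycle C R.
Proof.
move=> s_ne s_uniq Cs Rs; exists s; split; first by rewrite lt0n size_eq0.
do 2!split=> //; move=> x y /Cs x_s /Cs y_s; rewrite Rs //.
split=> [->|[i [lt_is [x_eq y_eq]]]]; last by rewrite y_eq -next_nth_mod // -x_eq.
exists (index x s); rewrite index_mem nth_index //.
by rewrite -next_nth_mod ?index_mem // nth_index.
Qed.

Section BranchingRoot.
Variables (T : finType) (E : rel T) (W : pred T) (p y1 y2 : T).
Hypotheses (y12 : y1 != y2) (Ey1 : E p y1) (Ey2 : E p y2).
Hypothesis E_W : forall x y, E x y -> W y.
Hypothesis lasso_sweeps : forall q (c : seq T),
  path E p q -> last p q \in c -> cycle E c -> {subset W <= p :: q ++ c}.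
Hypothesis sink_sweeps : forall q,
  path E p q -> (forall y, ~~ E (last p q) y) -> {subset W <= p :: q}.

Let nonroot := [pred z | W z && (z != p)].

Let nonroot_exists : exists z, nonroot z.
Proof.
case: (eqVneq y1 p) => [y1p|y1p]; last by exists y1; rewrite /= (E_W Ey1).
by exists y2; rewrite /= (E_W Ey2) -y1p eq_sym.
Qed.

Let last_in q : q != [::] -> last p q \in q.
Proof. by case: q => // a q _ /=; rewrite mem_last. Qed.

Let connect_walk x : connect E p x -> x != p ->
  exists2 q, path E p q /\ q != [::] & last p q = x.
Proof.
case/connectP=> q Eq ->; case: q Eq => [_|a q Eq _]; first by rewrite eqxx.
by exists (a :: q).
Qed.

Lemma root_unreturnable q : path E p q -> q != [::] -> last p q != p.
Proof.
apply: (branching_target_unreachable (tg := pred1 p) (sw := nonroot) y12 Ey1 Ey2).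
- by move=> y /E_W Wy; rewrite /= Wy orbN.
- exact: nonroot_exists.
move=> r Er r_ne /eqP lr z /andP[Wz zp].
have cyc : cycle E r by rewrite (cycle_path p) lr.
have := lasso_sweeps (isT : path E p [::]) _ cyc Wz; rewrite /= -{1}lr last_in //.
by rewrite inE (negbTE zp) => /(_ isT).
Qed.

Lemma root_noloop : ~~ E p p.
Proof.
apply/negP => Epp; have := @root_unreturnable [:: p]; rewrite /= Epp eqxx.
by move/(_ isT isT).
Qed.

Lemma cycle_notin_root c : cycle E c -> p \notin c.
Proof.
move=> cyc; apply/negP => /rot_to[i q rot_c].
have pq : path E p (rcons q p) by have := cyc; rewrite -(rot_cycle i) rot_c.
have := root_unreturnable pq.
by rewrite last_rcons eqxx -size_eq0 size_rcons => /(_ isT).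
Qed.

Lemma connect_root_eq x : connect E p x -> connect E x p -> x = p.
Proof.
move=> px /connectP[r Er lr]; apply/eqP; apply: contraTT isT => xp.
have [q [Eq q_ne] lq] := connect_walk px xp.
have := @root_unreturnable (q ++ r); rewrite cat_path Eq lq Er last_cat lq -lr eqxx.
by apply; case: q q_ne {Eq lq}.
Qed.

Lemma nonroot_succ x : connect E p x -> x != p -> exists y, E x y.
Proof.
move=> px xp; have [q [Eq q_ne] lq] := connect_walk px xp.
apply/existsP; apply: contraT; rewrite negb_exists => /forallP sink_x.
have := branching_target_unreachable (tg := pred1 x) (sw := nonroot)
  y12 Ey1 Ey2 _ _ _ Eq q_ne.
rewrite /= lq eqxx; apply=> //.
- move=> y Ey; rewrite /= (E_W Ey) andTb.
  by case: (eqVneq y p) Ey => [->|_]; rewrite ?(negbTE root_noloop) ?orbT.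
move=> r Er r_ne /eqP lr z /andP[Wz zp].
have := sink_sweeps Er _ Wz; rewrite inE (negbTE zp) lr; exact.
Qed.

Lemma exists_reachable_cycle : exists2 c, c != [::] /\ cycle E c &
  {subset c <= [pred x | connect E p x && (x != p)]}.
Proof.
apply: (@serial_cycle _ _ _ y1).
  rewrite inE (connect1 Ey1); apply: contraNneq root_noloop => y1p.
  by rewrite -{2}y1p.
move=> x /andP[px xp]; have [y Exy] := nonroot_succ px xp.
have py : connect E p y := connect_trans px (connect1 Exy).
exists y; rewrite // inE py; apply: contraNneq xp => yp.
by apply/eqP/connect_root_eq; rewrite // -yp connect1.
Qed.

Lemma reachable_cycle_sweeps c :
  c != [::] -> cycle E c -> {subset c <= connect E p} ->
  forall z, W z -> z != p -> z \in c.
Proof.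
move=> c_ne cyc c_reach z Wz zp; apply: contraT => zc.
have h_c : head p c \in c by rewrite -nth0 mem_nth // lt0n size_eq0.
have h_p : head p c != p by apply: contraNneq (cycle_notin_root cyc) => <-.
have [q [Eq q_ne] lq] := connect_walk (c_reach _ h_c) h_p.
have := branching_target_unreachable (tg := [pred y | y \in c])
  (sw := [pred w | [&& W w, w != p & w \notin c]]) y12 Ey1 Ey2 _ _ _ Eq q_ne.
rewrite /= lq h_c; apply.
- move=> y Ey; rewrite /= (E_W Ey); case: (y \in c) => //=; rewrite andbT.
  by apply: contraNneq root_noloop => yp; rewrite -{2}yp.
- by exists z; rewrite /= Wz zp.
move=> r Er _ lr w /and3P[Ww wp wc].
have := lasso_sweeps Er lr cyc Ww.
by rewrite inE (negbTE wp) mem_cat (negbTE wc) orbF.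
Qed.

Lemma branching_root_cycle : exists c, [/\ c != [::], ucycle E c,
  c =i [pred z | W z && (z != p)], {subset c <= connect E p} &
  forall x y, x \in c -> y \in c -> E x y = (y == next c x)].
Proof.
have [c0 [c0_ne c0_cyc] c0_reach] := exists_reachable_cycle.
have [c [c_ne c_cyc c_c0 c_min]] := minimal_subcycle c0_ne c0_cyc.
have c_reach : {subset c <= connect E p} by move=> z /c_c0 /c0_reach /andP[].
exists c; split=> //.
- by rewrite /ucycle c_cyc (min_cycle_uniq c_cyc c_min).
- move=> z; apply/idP/andP => [z_c|[Wz zp]]; last exact: reachable_cycle_sweeps.
  split; first exact: E_W (prev_cycle c_cyc z_c).
  by apply: contraTneq z_c => ->; exact: cycle_notin_root.
move=> x y x_c y_c; apply/idP/eqP => [|->]; last exact: next_cycle.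
exact: min_cycle_next.
Qed.
End BranchingRoot.

Section Intervals.
Variables (T : finType) (e : rel T) (V : T -> Prop).

Definition interval_rel : rel T := fun x y => `[< interval e V x y >].

Lemma interval_path_lift x q : path interval_rel x q ->
  exists s, [/\ path e x s, last x s = last x q, size q <= size s &
    forall z, V z -> z \in s -> z \in q].
Proof.
elim: q x => [|y q IH] x /=; first by exists [::].
case/andP=> /asboolP[_ [_ [s0 [es0 s0_V]]]] /IH[s [es ls sz s_q]].
exists (rcons s0 y ++ s); split.
- by rewrite cat_path es0 last_rcons.
- by rewrite last_cat last_rcons.
- by rewrite size_cat size_rcons addSn ltnS (leq_trans sz) ?leq_addl.
move=> z Vz; rewrite mem_cat mem_rcons inE -orbA.
case/or3P=> [/eqP->|zs0|/(s_q _ Vz) zq].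
- exact: mem_head.
- by case: (s0_V z zs0 Vz).
- by rewrite inE zq orbT.
Qed.

Lemma interval_sink_path x s z :
  V x -> (forall y, ~~ interval_rel x y) -> path e x s -> z \in s -> ~ V z.
Proof.
move=> Vx sink es zs Vz.
move: es; have : has (fun y => `[< V y >]) s.
  by apply/hasP; exists z => //; exact/asboolP.
case/split_find=> y s1 s2 /asboolP Vy noV_s1 es.
apply: (negP (sink y)); apply/asboolP; do 2!split=> //.
exists s1; split; first by move: es; rewrite cat_path => /andP[].
by move=> w /(hasPn noV_s1) /asboolP.
Qed.
End Intervals.

Section ControlFlow.
Variables (T : finType) (e : rel T) (p : T).

Local Notation A := (interval_rel e (Vp e p)).
Local Notation W := (fun x : T => `[< Vp e p x >]).

Lemma Vp_root : Vp e p p.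
Proof. by split=> [s _ _|f f0 _]; [exact: mem_head | exists 0]. Qed.

Lemma Ap_edge_Vp x y : A x y -> W y.
Proof. by case/asboolP=> _ [Vy _]; exact/asboolP. Qed.

Lemma Ap_walk_Vp q : path A p q -> Vp e p (last p q).
Proof.
case/lastP: q => [_|q y]; first exact: Vp_root.
by rewrite rcons_path last_rcons => /andP[_ /Ap_edge_Vp /asboolP].
Qed.

Lemma Ap_lasso_sweeps q (c : seq T) :
  path A p q -> last p q \in c -> cycle A c -> {subset W <= p :: q ++ c}.
Proof.
move=> Aq lq_c Ac z /asboolP Vz; set x := last p q in lq_c.
have q_sub : {subset p :: q <= p :: q ++ c}.
  by move=> w; rewrite !inE mem_cat orbA => ->.
have [s1 [es1 ls1 _ s1_q]] := interval_path_lift Aq.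
have [i c' rot_c] := rot_to lq_c.
have Ac' : path A x (rcons c' x) by move: Ac; rewrite -(rot_cycle i) rot_c.
have [s2 [es2 ls2 sz2 s2_c']] := interval_path_lift Ac'.
have s2_ne : s2 != [::].
  by rewrite -size_eq0 -lt0n (leq_trans _ sz2) // size_rcons.
rewrite last_rcons in ls2.
have [g [g0 eg] g_s2] := closed_path_infinite es2 s2_ne ls2.
have [f [f0 ef] f_cases] := infinite_path_cat es1 eg (etrans g0 (esym ls1)).
have [j fj] := Vz.2 f f0 ef.
have := f_cases j; rewrite fj => -[|[k gk]].
  rewrite inE => /predU1P[->|/(s1_q _ Vz) zq]; first exact: mem_head.
  by rewrite q_sub // inE zq orbT.
have := g_s2 k; rewrite -gk inE => /predU1P[->|/(s2_c' _ Vz)].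
  by rewrite q_sub // mem_last.
by rewrite mem_rcons -rot_c mem_rot inE mem_cat => ->; rewrite !orbT.
Qed.

Lemma Ap_sink_sweeps q :
  path A p q -> (forall y, ~~ A (last p q) y) -> {subset W <= p :: q}.
Proof.
move=> Aq sink z /asboolP Vz; set x := last p q in sink.
have beyond := interval_sink_path (Ap_walk_Vp Aq) sink.
have [s1 [es1 ls1 _ s1_q]] := interval_path_lift Aq.
have walk_in : z \in p :: s1 -> z \in p :: q.
  by rewrite !inE => /predU1P[->|/(s1_q _ Vz)->]; rewrite ?eqxx ?orbT.
case: (dead_end_or_infinite_path e x) => [[t et dead]|[g g0 eg]].
  have := Vz.1 (s1 ++ t).
  rewrite cat_path es1 ls1 et last_cat ls1 -cat_cons mem_cat.
  by case/(_ isT dead)/orP=> [/walk_in//|zt]; case: (beyond _ _ et zt Vz).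
have [f [f0 ef] f_cases] := infinite_path_cat es1 eg (etrans g0 (esym ls1)).
have [j fj] := Vz.2 f f0 ef.
have := f_cases j; rewrite fj => -[/walk_in//|[k gk]].
have /connectP[t et lt] := infinite_path_connect k eg.
rewrite g0 -gk in et lt.
case: t et lt => [_ ->|w t et lt]; first by rewrite /= /x mem_last.
by case: (beyond _ _ et _ Vz); rewrite lt /= mem_last.
Qed.

Lemma Ap_reachE x y : Ap_reach e p x y <-> connect A x y.
Proof. exact: clos_refl_trans_connect. Qed.

Variables y1 y2 : T.
Hypotheses (y12 : y1 <> y2) (Ap1 : Ap_edge e p p y1) (Ap2 : Ap_edge e p p y2).

Let y12b : y1 != y2. Proof. exact/eqP. Qed.
Let A1 : A p y1. Proof. exact: asboolT. Qed.
Let A2 : A p y2. Proof. exact: asboolT. Qed.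

Let Ap_reach_root x : Ap_reach e p p x -> Ap_reach e p x p -> x = p.
Proof.
move=> /Ap_reachE px /Ap_reachE xp.
exact: (connect_root_eq y12b A1 A2 Ap_edge_Vp Ap_lasso_sweeps px xp).
Qed.

Lemma root_trivial_SCC : trivial_SCC e p (fun x => x = p).
Proof.
split; last first.
  move=> x y -> -> /asboolT; apply/negP.
  exact: (root_noloop y12b A1 A2 Ap_edge_Vp Ap_lasso_sweeps).
split; first by exists p.
split; first by move=> x ->; exact: Vp_root.
split; first by move=> x y -> ->; exact: rt_refl.
by move=> x y -> _; exact: Ap_reach_root.
Qed.

Lemma nonroot_SCC_cycle :
  is_SCC e p (fun x => Vp e p x /\ x <> p) /\
  is_cycle (fun x => Vp e p x /\ x <> p) (Ap_edge e p).
Proof.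
have [c [c_ne /andP[c_cyc c_uniq] c_W c_reach c_next]] :=
  branching_root_cycle y12b A1 A2 Ap_edge_Vp Ap_lasso_sweeps Ap_sink_sweeps.
have C_c z : Vp e p z /\ z <> p <-> z \in c.
  rewrite c_W inE /=; split=> [[Vz /eqP zp]|/andP[/asboolP Vz /eqP zp]] //.
  by rewrite (asboolT Vz) zp.
split; last first.
  apply: is_cycle_next c_ne c_uniq C_c _ => x y x_c y_c.
  split=> [/asboolT Axy|->]; last exact/asboolP/(next_cycle c_cyc x_c).
  by apply/eqP; rewrite -c_next.
split.
  by exists (head p c); apply/C_c; rewrite -nth0 mem_nth // lt0n size_eq0.
split; first by move=> x [].
split=> [x y /C_c x_c /C_c y_c|x y /C_c x_c Vy xy _].
  exact/Ap_reachE/(connect_cycle c_cyc).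
split=> // yp; rewrite yp in xy; have [_ xp] := (C_c x).2 x_c; apply: xp.
by apply: Ap_reach_root xy; apply/Ap_reachE; exact: c_reach.
Qed.
End ControlFlow.

Theorem lemma4p8 (T : finType) (e : rel T) (p : T) :
  cfg e -> predicate_node e p ->
  (exists y1 y2, y1 <> y2 /\ Ap_edge e p p y1 /\ Ap_edge e p p y2) ->
  trivial_SCC e p (fun x => x = p) /\
  is_SCC e p (fun x => Vp e p x /\ x <> p) /\
  is_cycle (fun x => Vp e p x /\ x <> p) (Ap_edge e p).
Proof.
move=> _ _ [y1 [y2 [y12 [Ap1 Ap2]]]].
split; [exact: root_trivial_SCC y12 Ap1 Ap2 | exact: nonroot_SCC_cycle y12 Ap1 Ap2].
Qed.
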